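(* Assume $0<\nu<1$, $\mathbf{x}_E(t_0)\neq \mathbf{x}_P(t_0)$, and fix $\delta>0$. Let the pursuer use the feedback law $$\mathbf{v}_P(t)=\frac{\mathbf{z}_P(t)}{\|\mathbf{z}_P(t)\|},\qquad \mathbf{z}_P(t)=\big(R_{\mathcal C}-R_{\mathcal A}(t)\big)\frac{\mathbf{r}(t)}{\|\mathbf{r}(t)\|}+\nu\,\mathbf{y}(t).$$ Then, for every admissible evader control $\mathbf{v}_E(\cdot)$ with $\|\mathbf{v}_E(t)\|\le\nu$: (i) this law is well defined (i.e. $\mathbf{z}_P(t)\neq 0$) up to capture, and $\mathcal A(t)$ is contained in the interior $\mathcal C^\circ$ of $\mathcal C$ for all $t>t_0$ up to capture; (ii) capture ($\mathbf{x}_P(t)=\mathbf{x}_E(t)$) occurs at some finite time $t_{\rm capture}\le t_0+2(1+\nu^{-1})R_{\mathcal C}\ln(R_{\mathcal C}/\delta)$.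
   Context: Setting (simple-motion pursuit–evasion in the plane). An evader and a pursuer have positions $\mathbf{x}_E(t),\mathbf{x}_P(t)\in\mathbb R^2$ with dynamics $\dot{\mathbf{x}}_E=\mathbf{v}_E$, $\dot{\mathbf{x}}_P=\mathbf{v}_P$, where the controls satisfy $\|\mathbf{v}_E\|\le\nu$ and $\|\mathbf{v}_P\|\le 1$ with $0\le\nu<1$. The game starts at time $t_0$ and terminates at capture, i.e. the first time $\mathbf{x}_P=\mathbf{x}_E$. Set $\alpha=1/(1-\nu^2)$, $\gamma=\nu\alpha$, $\beta=\nu^2\alpha$, $\mathbf{r}(t)=\mathbf{x}_E(t)-\mathbf{x}_P(t)$. The Apollonius disc at time $t$ is the closed disc $\mathcal A(t)=\{\mathbf{x}:\|\mathbf{x}-\mathbf{x}_{\mathcal A}(t)\|\le R_{\mathcal A}(t)\}$ with center $\mathbf{x}_{\mathcal A}(t)=\alpha\mathbf{x}_E(t)-\beta\mathbf{x}_P(t)$ and radius $R_{\mathcal A}(t)=\gamma\|\mathbf{r}(t)\|$. Given $\delta>0$, $\mathcal C$ is the fixed closed disc with center $\mathbf{x}_{\mathcal C}=\mathbf{x}_{\mathcal A}(t_0)$ and radius $R_{\mathcal C}=R_{\mathcal A}(t_0)+\delta$, and $\mathbf{y}(t)=\mathbf{x}_{\mathcal A}(t)-\mathbf{x}_{\mathcal C}$. *)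

From Stdlib Require Import Reals.
Open Scope R_scope.

Definition vec : Type := (R * R)%type.

Definition vadd (u v : vec) : vec := (fst u + fst v, snd u + snd v).
Definition vsub (u v : vec) : vec := (fst u - fst v, snd u - snd v).
Definition vscale (a : R) (u : vec) : vec := (a * fst u, a * snd u).
Definition vzero : vec := (0, 0).
Definition vnorm (u : vec) : R := sqrt (fst u ^ 2 + snd u ^ 2).

Definition cdisc (c : vec) (rho : R) : vec -> Prop :=
  fun x => vnorm (vsub x c) <= rho.

Definition interior2 (S : vec -> Prop) : vec -> Prop :=
  fun x => exists eps, 0 < eps /\ forall w, vnorm (vsub w x) < eps -> S w.

Definition subset2 (S T : vec -> Prop) : Prop := forall x, S x -> T x.

Definition alpha (nu : R) : R := 1 / (1 - nu ^ 2).
Definition gamma (nu : R) : R := nu * alpha nu.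
Definition beta (nu : R) : R := nu ^ 2 * alpha nu.

Definition rvec (xE xP : R -> vec) (t : R) : vec := vsub (xE t) (xP t).

Definition xA (nu : R) (xE xP : R -> vec) (t : R) : vec :=
  vsub (vscale (alpha nu) (xE t)) (vscale (beta nu) (xP t)).
Definition RA (nu : R) (xE xP : R -> vec) (t : R) : R :=
  gamma nu * vnorm (rvec xE xP t).
Definition Adisc (nu : R) (xE xP : R -> vec) (t : R) : vec -> Prop :=
  cdisc (xA nu xE xP t) (RA nu xE xP t).

Definition xC (nu t0 : R) (xE xP : R -> vec) : vec := xA nu xE xP t0.
Definition RC (nu delta t0 : R) (xE xP : R -> vec) : R := RA nu xE xP t0 + delta.
Definition Cdisc (nu delta t0 : R) (xE xP : R -> vec) : vec -> Prop :=
  cdisc (xC nu t0 xE xP) (RC nu delta t0 xE xP).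

Definition yvec (nu t0 : R) (xE xP : R -> vec) (t : R) : vec :=
  vsub (xA nu xE xP t) (xC nu t0 xE xP).

Definition zP (nu delta t0 : R) (xE xP : R -> vec) (t : R) : vec :=
  vadd (vscale ((RC nu delta t0 xE xP - RA nu xE xP t) / vnorm (rvec xE xP t))
               (rvec xE xP t))
       (vscale nu (yvec nu t0 xE xP t)).

Definition vP (nu delta t0 : R) (xE xP : R -> vec) (t : R) : vec :=
  vscale (/ vnorm (zP nu delta t0 xE xP t)) (zP nu delta t0 xE xP t).

Definition has_vderiv (x : R -> vec) (t : R) (v : vec) : Prop :=
  derivable_pt_lim (fun s => fst (x s)) t (fst v) /\
  derivable_pt_lim (fun s => snd (x s)) t (snd v).

Definition right_cont_at (x : R -> vec) (t0 : R) : Prop :=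
  forall eps, 0 < eps -> exists d, 0 < d /\
    forall s, t0 <= s < t0 + d -> vnorm (vsub (x s) (x t0)) < eps.

(* Trajectory generated by an admissible evader control
   (measurable, ||v_E|| <= nu) on [t0, +oo): exactly the nu-Lipschitz curves. *)
Definition evader_admissible (nu t0 : R) (xE : R -> vec) : Prop :=
  forall s t, t0 <= s -> t0 <= t -> vnorm (vsub (xE t) (xE s)) <= nu * Rabs (t - s).

(* With a := R_C - R_A and y the displacement of the Apollonius centre, the
   Apollonius disc lies in the interior of C as soon as |y| < a, i.e. as soon as
   V := a^2 - |y|^2 > 0 with a > 0.  Write z for the pursuer's heading z_P and
   u := a nu r/|r| + y.  To first order in a time step h, the evader can decrease V
   by at most 2 gamma h |u| while the pursuer increases it by 2 gamma h |z|; since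
   |z|^2 - |u|^2 = (1 - nu^2) V and |z| + |u| <= 2 (1 + nu) R_C, the net rate is at
   least k V with k = nu / ((1 + nu) R_C).  The evader is only Lipschitz, so this is
   a statement about right Dini derivatives, and real induction shows that
   V(t) exp (-k (t - t0)) never drops below V(t0) = delta^2.  Since V < R_C^2 before
   capture, capture happens before t0 + 2 ln (R_C / delta) / k, which is the claimed
   bound; the capture time is the first zero of |r|. *)

From Stdlib Require Import Reals Lra Psatz Classical.
Open Scope R_scope.

(** * Planar vectors *)

Definition vdot (u v : vec) : R := fst u * fst v + snd u * snd v.

Lemma vnorm_ge0 (u : vec) : 0 <= vnorm u.
Proof. apply sqrt_pos. Qed.

Lemma vnorm_sqr (u : vec) : vnorm u ^ 2 = vdot u u.
Proof. unfold vnorm, vdot; rewrite pow2_sqrt by nra; ring. Qed.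

Lemma le_of_pow2_le (x y : R) : 0 <= y -> x ^ 2 <= y ^ 2 -> x <= y.
Proof. intros Hy Hsq; destruct (Rle_lt_dec x y); auto; nra. Qed.

Lemma vnorm_le (u : vec) (c : R) : 0 <= c -> vdot u u <= c ^ 2 -> vnorm u <= c.
Proof.
  intros Hc Hu; apply le_of_pow2_le; [exact Hc|]; now rewrite vnorm_sqr.
Qed.

Lemma vdot_self_le (u : vec) (b : R) : vnorm u <= b -> vdot u u <= b ^ 2.
Proof.
  intros Hb; rewrite <- vnorm_sqr; pose proof (vnorm_ge0 u); apply pow_incr; lra.
Qed.

Lemma vnorm_vzero : vnorm vzero = 0.
Proof.
  unfold vnorm, vzero; cbn [fst snd]; replace (0 ^ 2 + 0 ^ 2) with 0 by ring; exact sqrt_0.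
Qed.

Lemma vnorm_vsub_diag (u : vec) : vnorm (vsub u u) = 0.
Proof.
  unfold vnorm, vsub; cbn [fst snd]; rewrite <- sqrt_0; f_equal; ring.
Qed.

Lemma vnorm_vsub_eq0 (u v : vec) : vnorm (vsub u v) = 0 -> u = v.
Proof.
  destruct u as [u1 u2], v as [v1 v2]; intros H0.
  pose proof (vnorm_sqr (vsub (u1, u2) (v1, v2))) as Hsq.
  rewrite H0 in Hsq; unfold vdot, vsub in Hsq; cbn [fst snd] in Hsq.
  pose proof (Rle_0_sqr (u1 - v1)); pose proof (Rle_0_sqr (u2 - v2)); unfold Rsqr in *.
  f_equal; apply Rminus_diag_uniq, Rsqr_0_uniq; unfold Rsqr; lra.
Qed.

Lemma vnorm_vsub_gt0 (u v : vec) : u <> v -> 0 < vnorm (vsub u v).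
Proof.
  intros Huv; destruct (vnorm_ge0 (vsub u v)) as [|H0]; auto.
  now destruct Huv; apply vnorm_vsub_eq0.
Qed.

Lemma vdot_vadd_self (u v : vec) :
  vdot (vadd u v) (vadd u v) = vdot u u + 2 * vdot u v + vdot v v.
Proof. unfold vdot, vadd; cbn [fst snd]; ring. Qed.

Lemma vdot_le_vnorm (u v : vec) : vdot u v <= vnorm u * vnorm v.
Proof.
  pose proof (vnorm_sqr u); pose proof (vnorm_sqr v).
  pose proof (vnorm_ge0 u); pose proof (vnorm_ge0 v).
  assert (Lagrange : vdot u v ^ 2 <= vdot u u * vdot v v).
  { unfold vdot; pose proof (pow2_ge_0 (fst u * snd v - snd u * fst v)); nra. }
  apply le_of_pow2_le; [now apply Rmult_le_pos|].
  rewrite Rpow_mult_distr; congruence.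
Qed.

Lemma vnorm_vadd_le (u v : vec) : vnorm (vadd u v) <= vnorm u + vnorm v.
Proof.
  apply vnorm_le; [pose proof (vnorm_ge0 u); pose proof (vnorm_ge0 v); lra|].
  pose proof (vdot_le_vnorm u v); pose proof (vnorm_sqr u); pose proof (vnorm_sqr v).
  unfold vdot, vadd in *; simpl in *; nra.
Qed.

Lemma vnorm_vscale (c : R) (u : vec) : vnorm (vscale c u) = Rabs c * vnorm u.
Proof.
  unfold vnorm, vscale; cbn [fst snd].
  replace ((c * fst u) ^ 2 + (c * snd u) ^ 2) with (c ^ 2 * (fst u ^ 2 + snd u ^ 2)) by ring.
  rewrite sqrt_mult by nra; f_equal; rewrite <- Rsqr_pow2; apply sqrt_Rsqr_abs.
Qed.

Lemma vdot_ge_neg_vnorm (u v : vec) : - (vnorm u * vnorm v) <= vdot u v.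
Proof.
  pose proof (vdot_le_vnorm (vscale (-1) u) v) as Hcs.
  rewrite vnorm_vscale, Rabs_left in Hcs by lra.
  unfold vdot, vscale in *; cbn [fst snd] in Hcs; lra.
Qed.

Lemma vnorm_vsub_le (u v : vec) : vnorm (vsub u v) <= vnorm u + vnorm v.
Proof.
  replace (vsub u v) with (vadd u (vscale (-1) v))
    by (unfold vsub, vadd, vscale; cbn [fst snd]; f_equal; ring).
  replace (vnorm v) with (vnorm (vscale (-1) v))
    by (rewrite vnorm_vscale, Rabs_left by lra; ring).
  apply vnorm_vadd_le.
Qed.

Lemma vnorm_le_abs (u : vec) : vnorm u <= Rabs (fst u) + Rabs (snd u).
Proof.
  apply vnorm_le; [pose proof (Rabs_pos (fst u)); pose proof (Rabs_pos (snd u)); lra|].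
  pose proof (pow2_abs (fst u)); pose proof (pow2_abs (snd u)).
  pose proof (Rabs_pos (fst u)); pose proof (Rabs_pos (snd u)); unfold vdot; nra.
Qed.

Lemma Rabs_fst_le_vnorm (u : vec) : Rabs (fst u) <= vnorm u.
Proof.
  apply le_of_pow2_le; [apply vnorm_ge0|].
  rewrite pow2_abs, vnorm_sqr; unfold vdot; nra.
Qed.

Lemma Rabs_snd_le_vnorm (u : vec) : Rabs (snd u) <= vnorm u.
Proof.
  apply le_of_pow2_le; [apply vnorm_ge0|].
  rewrite pow2_abs, vnorm_sqr; unfold vdot; nra.
Qed.

Lemma vdot_normalized (z : vec) : 0 < vnorm z -> vdot (vscale (/ vnorm z) z) z = vnorm z.
Proof.
  intros Hz; replace (vdot (vscale (/ vnorm z) z) z) with (/ vnorm z * vdot z z)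
    by (unfold vdot, vscale; cbn [fst snd]; ring).
  rewrite <- vnorm_sqr; field; lra.
Qed.

Lemma vnorm_normalized (z : vec) : 0 < vnorm z -> vnorm (vscale (/ vnorm z) z) = 1.
Proof.
  intros Hz; rewrite vnorm_vscale, Rabs_right; [field; lra|].
  apply Rle_ge; left; apply Rinv_0_lt_compat; exact Hz.
Qed.

Lemma vnorm_vadd_le_linear (r d : vec) : 0 < vnorm r ->
  vnorm (vadd r d) <= vnorm r + (2 * vdot r d + vdot d d) / (2 * vnorm r).
Proof.
  intros Hr; set (rho := vnorm r) in *; set (X := 2 * vdot r d + vdot d d).
  assert (Hsum : vdot (vadd r d) (vadd r d) = rho ^ 2 + X)
    by (unfold X, rho; rewrite vdot_vadd_self, vnorm_sqr; ring).
  assert (HX : - rho ^ 2 <= X) by (pose proof (vnorm_sqr (vadd r d)); nra).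
  assert (HXr : - rho / 2 <= X / (2 * rho)).
  { apply (Rmult_le_reg_r (2 * rho)); [lra|]; field_simplify; nra. }
  apply vnorm_le; [lra|].
  rewrite Hsum; replace ((rho + X / (2 * rho)) ^ 2) with (rho ^ 2 + X + (X / (2 * rho)) ^ 2)
    by (field; lra).
  pose proof (pow2_ge_0 (X / (2 * rho))); lra.
Qed.

Lemma cdisc_subset_interior (c c' : vec) (rho rho' : R) :
  vnorm (vsub c' c) + rho' < rho -> subset2 (cdisc c' rho') (interior2 (cdisc c rho)).
Proof.
  intros Hlt x Hx; unfold cdisc in *.
  assert (Hxc : vnorm (vsub x c) <= rho' + vnorm (vsub c' c)).
  { replace (vsub x c) with (vadd (vsub x c') (vsub c' c))
      by (unfold vadd, vsub; cbn [fst snd]; f_equal; ring).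
    pose proof (vnorm_vadd_le (vsub x c') (vsub c' c)); lra. }
  exists (rho - vnorm (vsub x c)); split; [lra|]; intros w Hw.
  replace (vsub w c) with (vadd (vsub w x) (vsub x c))
    by (unfold vadd, vsub; cbn [fst snd]; f_equal; ring).
  pose proof (vnorm_vadd_le (vsub w x) (vsub x c)); lra.
Qed.

(** * The Apollonius Lyapunov function *)

Lemma alpha_pos (nu : R) : 0 <= nu < 1 -> 0 < alpha nu.
Proof. intros Hnu; unfold alpha; apply Rdiv_lt_0_compat; nra. Qed.

Lemma gamma_pos (nu : R) : 0 < nu < 1 -> 0 < gamma nu.
Proof. intros Hnu; unfold gamma; pose proof (alpha_pos nu ltac:(lra)); nra. Qed.

Lemma gamma_one_sub_sqr (nu : R) : 0 <= nu < 1 -> gamma nu * (1 - nu ^ 2) = nu.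
Proof. intros Hnu; unfold gamma, alpha; field; nra. Qed.

(* With [a = R_C - R_A(t)], [r = r(t)] and [y = y(t)] this is the heading [zP] of the
   feedback law. *)
Definition pursuer_dir (nu a : R) (r y : vec) : vec :=
  vadd (vscale (a / vnorm r) r) (vscale nu y).

(* The heading along which an evader step decreases [lyap] fastest, to first order
   (see [lyap_expansion]). *)
Definition evader_dir (nu a : R) (r y : vec) : vec :=
  vadd (vscale (a * nu / vnorm r) r) y.

Lemma vnorm_vscale_normalized (a : R) (r : vec) : 0 < vnorm r -> 0 <= a ->
  vnorm (vscale (a / vnorm r) r) = a.
Proof.
  intros Hr Ha; rewrite vnorm_vscale, Rabs_right.
  - field; lra.
  - apply Rle_ge, Rmult_le_pos; [lra | left; apply Rinv_0_lt_compat; lra].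
Qed.

Lemma vnorm_pursuer_dir_le (nu a : R) (r y : vec) : 0 <= nu -> 0 < vnorm r -> 0 <= a ->
  vnorm (pursuer_dir nu a r y) <= a + nu * vnorm y.
Proof.
  intros Hnu Hr Ha; unfold pursuer_dir.
  rewrite <- (vnorm_vscale_normalized a r Hr Ha) at 2.
  replace (nu * vnorm y) with (vnorm (vscale nu y))
    by (rewrite vnorm_vscale, Rabs_right; lra).
  apply vnorm_vadd_le.
Qed.

Lemma vnorm_evader_dir_le (nu a : R) (r y : vec) : 0 <= nu -> 0 < vnorm r -> 0 <= a ->
  vnorm (evader_dir nu a r y) <= a * nu + vnorm y.
Proof.
  intros Hnu Hr Ha; unfold evader_dir.
  rewrite <- (vnorm_vscale_normalized (a * nu) r Hr) at 2 by nra; apply vnorm_vadd_le.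
Qed.

Lemma dir_sqr_diff (nu a : R) (r y : vec) : 0 < vnorm r ->
  vdot (pursuer_dir nu a r y) (pursuer_dir nu a r y)
    - vdot (evader_dir nu a r y) (evader_dir nu a r y)
  = (1 - nu ^ 2) * (a ^ 2 - vdot y y).
Proof.
  intros Hr; pose proof (vnorm_sqr r) as Hrr; unfold vdot in *.
  unfold pursuer_dir, evader_dir, vadd, vscale; cbn [fst snd].
  set (rho := vnorm r) in *.
  transitivity ((1 - nu ^ 2) * (a ^ 2 / rho ^ 2 * (fst r * fst r + snd r * snd r)
                 - (fst y * fst y + snd y * snd y))).
  - field; lra.
  - rewrite <- Hrr; field; lra.
Qed.

Lemma dir_gap (nu a c : R) (r y : vec) : 0 <= nu <= 1 -> 0 < vnorm r -> vnorm y <= a <= c ->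
  (1 - nu ^ 2) * (a ^ 2 - vdot y y)
    <= 2 * (1 + nu) * c * (vnorm (pursuer_dir nu a r y) - vnorm (evader_dir nu a r y)).
Proof.
  intros Hnu Hr [Hya Hac].
  pose proof (vnorm_ge0 y) as Hy0.
  pose proof (vnorm_pursuer_dir_le nu a r y ltac:(lra) Hr ltac:(lra)) as Hz.
  pose proof (vnorm_evader_dir_le nu a r y ltac:(lra) Hr ltac:(lra)) as Hu.
  pose proof (dir_sqr_diff nu a r y Hr) as Hdiff.
  rewrite <- !vnorm_sqr in Hdiff.
  pose proof (vnorm_ge0 (pursuer_dir nu a r y)); pose proof (vnorm_ge0 (evader_dir nu a r y)).
  set (Z := vnorm (pursuer_dir nu a r y)) in *; set (U := vnorm (evader_dir nu a r y)) in *.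
  rewrite <- vnorm_sqr.
  assert (HD : 0 <= (1 - nu ^ 2) * (a ^ 2 - vnorm y ^ 2)) by (apply Rmult_le_pos; nra).
  assert (HUZ : U <= Z) by (apply le_of_pow2_le; lra).
  assert (Hsum : Z + U <= 2 * (1 + nu) * c) by nra.
  replace ((1 - nu ^ 2) * (a ^ 2 - vnorm y ^ 2)) with ((Z - U) * (Z + U))
    by (rewrite <- Hdiff; ring).
  rewrite (Rmult_comm _ (Z - U)); apply Rmult_le_compat_l; lra.
Qed.

(* The pursuer's progress along [pursuer_dir] beats the evader's along [evader_dir] by a
   multiple of [a^2 - |y|^2]: this is where the exponential rate comes from. *)
Lemma dir_gain (nu a c : R) (r y : vec) : 0 < nu < 1 -> 0 < vnorm r -> vnorm y <= a <= c ->
  0 < c ->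
  (a ^ 2 - vdot y y) * (nu / ((1 + nu) * c))
    <= 2 * gamma nu * (vnorm (pursuer_dir nu a r y) - vnorm (evader_dir nu a r y)).
Proof.
  intros Hnu Hr Hyac Hc.
  pose proof (dir_gap nu a c r y ltac:(lra) Hr Hyac) as Hgap.
  pose proof (gamma_pos nu Hnu) as Hga.
  rewrite <- (gamma_one_sub_sqr nu ltac:(lra)) at 1.
  replace ((a ^ 2 - vdot y y) * (gamma nu * (1 - nu ^ 2) / ((1 + nu) * c)))
    with (gamma nu / ((1 + nu) * c) * ((1 - nu ^ 2) * (a ^ 2 - vdot y y))) by (field; nra).
  apply Rle_trans with
    (gamma nu / ((1 + nu) * c)
       * (2 * (1 + nu) * c * (vnorm (pursuer_dir nu a r y) - vnorm (evader_dir nu a r y)))).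
  - apply Rmult_le_compat_l; [|exact Hgap].
    left; apply Rdiv_lt_0_compat; nra.
  - right; field; nra.
Qed.

Lemma vnorm_pursuer_dir_gt0 (nu a : R) (r y : vec) :
  0 <= nu < 1 -> 0 < vnorm r -> vdot y y < a ^ 2 -> 0 < vnorm (pursuer_dir nu a r y).
Proof.
  intros Hnu Hr Hy; pose proof (dir_sqr_diff nu a r y Hr) as Hdiff.
  rewrite <- (vnorm_sqr (pursuer_dir nu a r y)), <- (vnorm_sqr (evader_dir nu a r y)) in Hdiff.
  pose proof (pow2_ge_0 (vnorm (evader_dir nu a r y))).
  assert (0 < (1 - nu ^ 2) * (a ^ 2 - vdot y y)) by (apply Rmult_lt_0_compat; nra).
  pose proof (vnorm_ge0 (pursuer_dir nu a r y)) as [|Hz]; auto.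
  rewrite <- Hz in Hdiff; nra.
Qed.

Definition lyap (nu c : R) (r y : vec) : R := (c - gamma nu * vnorm r) ^ 2 - vdot y y.

Lemma vnorm_lt_of_lyap_pos (nu c : R) (r y : vec) :
  0 < c - gamma nu * vnorm r -> 0 < lyap nu c r y -> vnorm y < c - gamma nu * vnorm r.
Proof.
  unfold lyap; intros Ha HV; rewrite <- vnorm_sqr in HV.
  pose proof (vnorm_ge0 y); destruct (Rlt_le_dec (vnorm y) (c - gamma nu * vnorm r)); auto.
  nra.
Qed.

Lemma sqr_sub_vnorm_vadd_ge (c g : R) (r d : vec) :
  0 < vnorm r -> 0 <= g -> 0 <= c - g * vnorm r ->
  (c - g * vnorm r) ^ 2 - (c - g * vnorm r) * g * (2 * vdot r d + vdot d d) / vnorm r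
    <= (c - g * vnorm (vadd r d)) ^ 2.
Proof.
  intros Hr Hg Ha; set (rho := vnorm r) in *; set (a := c - g * rho) in *.
  pose proof (vnorm_vadd_le_linear r d Hr) as Hlin; fold rho in Hlin.
  set (X := 2 * vdot r d + vdot d d) in *.
  replace (c - g * vnorm (vadd r d)) with (a - g * (vnorm (vadd r d) - rho)) by (unfold a; ring).
  assert (a * g * (vnorm (vadd r d) - rho) <= a * g * (X / (2 * rho)))
    by (apply Rmult_le_compat_l; [nra | lra]).
  replace (a * g * X / rho) with (2 * (a * g * (X / (2 * rho)))) by (field; lra).
  pose proof (pow2_ge_0 (g * (vnorm (vadd r d) - rho))); nra.
Qed.

Lemma lyap_expansion (nu c : R) (r y de dp : vec) :
  let a := c - gamma nu * vnorm r in
  let dr := vsub de dp in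
  let dy := vsub (vscale (alpha nu) de) (vscale (beta nu) dp) in
  0 <= nu < 1 -> 0 < vnorm r -> 0 <= a ->
  lyap nu c r y
    + (2 * gamma nu * vdot dp (pursuer_dir nu a r y) - 2 * alpha nu * vdot de (evader_dir nu a r y))
    - (a * gamma nu / vnorm r * vdot dr dr + vdot dy dy)
  <= lyap nu c (vadd r dr) (vadd y dy).
Proof.
  intros a dr dy Hnu Hr Ha.
  assert (Hga : 0 <= gamma nu) by (unfold gamma; pose proof (alpha_pos nu Hnu); nra).
  pose proof (sqr_sub_vnorm_vadd_ge c (gamma nu) r dr Hr Hga Ha) as Hrad; fold a in Hrad.
  assert (Hlin : a * gamma nu / vnorm r * (2 * vdot r dr) + 2 * vdot y dy
                 = 2 * alpha nu * vdot de (evader_dir nu a r y)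
                   - 2 * gamma nu * vdot dp (pursuer_dir nu a r y)).
  { unfold dr, dy, evader_dir, pursuer_dir, gamma, beta, vdot, vsub, vadd, vscale; cbn [fst snd].
    field; lra. }
  replace (a * gamma nu * (2 * vdot r dr + vdot dr dr) / vnorm r)
    with (a * gamma nu / vnorm r * (2 * vdot r dr) + a * gamma nu / vnorm r * vdot dr dr)
    in Hrad by (field; lra).
  unfold lyap; fold a; rewrite vdot_vadd_self; lra.
Qed.

Lemma lyap_drift_ge (nu c h th : R) (r y de dp : vec) :
  let a := c - gamma nu * vnorm r in
  let z := pursuer_dir nu a r y in
  0 < nu < 1 -> 0 < vnorm r -> 0 < a -> 0 < lyap nu c r y -> 0 <= h -> 0 <= th ->
  vnorm de <= nu * h ->
  vnorm (vsub dp (vscale h (vscale (/ vnorm z) z))) <= th * h ->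
  lyap nu c r y * (nu / ((1 + nu) * c)) * h - 4 * gamma nu * c * th * h
    <= 2 * gamma nu * vdot dp z - 2 * alpha nu * vdot de (evader_dir nu a r y).
Proof.
  intros a z Hnu Hr Ha HV Hh Hth Hde Hdp.
  set (u := evader_dir nu a r y).
  set (q := vsub dp (vscale h (vscale (/ vnorm z) z))) in *.
  pose proof (gamma_pos nu Hnu) as Hga.
  assert (Hac : a <= c) by (unfold a; pose proof (vnorm_ge0 r); nra).
  pose proof (vnorm_ge0 y) as Hy0; pose proof (vnorm_ge0 u) as Hu0.
  assert (Hya : vnorm y < a) by (apply vnorm_lt_of_lyap_pos; assumption).
  assert (Hz0 : 0 < vnorm z)
    by (apply vnorm_pursuer_dir_gt0; [lra | exact Hr | rewrite <- vnorm_sqr; nra]).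
  assert (Hz2c : vnorm z <= 2 * c).
  { pose proof (vnorm_pursuer_dir_le nu a r y ltac:(lra) Hr ltac:(lra)) as Hz; fold z in Hz.
    pose proof (Rmult_le_compat_r (vnorm y) nu 1 Hy0 ltac:(lra)); lra. }
  pose proof (Rmult_le_compat_r h _ _ Hh (dir_gain nu a c r y Hnu Hr ltac:(lra) ltac:(lra)))
    as Hgain; fold z u in Hgain.
  assert (Hdeu : 2 * alpha nu * vdot de u <= 2 * gamma nu * h * vnorm u).
  { pose proof (alpha_pos nu ltac:(lra)) as Hal.
    pose proof (Rmult_le_compat_r (vnorm u) _ _ Hu0 Hde) as Hdeu.
    pose proof (Rmult_le_compat_l (2 * alpha nu) _ _ ltac:(lra)
                  (Rle_trans _ _ _ (vdot_le_vnorm de u) Hdeu)).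
    unfold gamma; lra. }
  assert (Hdpz : h * vnorm z - th * h * vnorm z <= vdot dp z).
  { pose proof (vdot_ge_neg_vnorm q z).
    pose proof (Rmult_le_compat_r (vnorm z) _ _ ltac:(lra) Hdp).
    replace (vdot dp z) with (vdot q z + h * vdot (vscale (/ vnorm z) z) z)
      by (unfold q, vdot, vsub, vscale; cbn [fst snd]; ring).
    rewrite vdot_normalized by lra; lra. }
  pose proof (Rmult_le_compat_l (2 * gamma nu) _ _ ltac:(lra) Hdpz).
  pose proof (Rmult_le_compat_l (2 * gamma nu * th * h) _ _
                (Rmult_le_pos _ h (Rmult_le_pos (2 * gamma nu) th ltac:(lra) Hth) Hh) Hz2c).
  change (lyap nu c r y) with (a ^ 2 - vdot y y); lra.
Qed.

Lemma lyap_step (nu c h th : R) (r y de dp : vec) :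
  let a := c - gamma nu * vnorm r in
  let z := pursuer_dir nu a r y in
  0 < nu < 1 -> 0 < vnorm r -> 0 < a -> 0 < lyap nu c r y -> 0 < h -> 0 <= th <= 1 ->
  vnorm de <= nu * h ->
  vnorm (vsub dp (vscale h (vscale (/ vnorm z) z))) <= th * h ->
  lyap nu c r y * (1 + nu / ((1 + nu) * c) * h)
    - h * (4 * gamma nu * c * th
           + h * (9 * a * gamma nu / vnorm r + (alpha nu + 2 * beta nu) ^ 2))
  <= lyap nu c (vadd r (vsub de dp)) (vadd y (vsub (vscale (alpha nu) de) (vscale (beta nu) dp))).
Proof.
  intros a z Hnu Hr Ha HV Hh Hth Hde Hdp.
  set (dr := vsub de dp); set (dy := vsub (vscale (alpha nu) de) (vscale (beta nu) dp)).
  pose proof (alpha_pos nu ltac:(lra)) as Hal; pose proof (gamma_pos nu Hnu) as Hga.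
  assert (Hbe : 0 < beta nu) by (apply Rmult_lt_0_compat; [nra | exact Hal]).
  assert (Hz0 : 0 < vnorm z).
  { apply vnorm_pursuer_dir_gt0; [lra | exact Hr|].
    pose proof (vnorm_lt_of_lyap_pos nu c r y Ha HV) as Hya; fold a in Hya.
    rewrite <- vnorm_sqr; pose proof (vnorm_ge0 y); nra. }
  set (v := vscale (/ vnorm z) z) in *; set (q := vsub dp (vscale h v)) in *.
  assert (Hdp2 : vnorm dp <= 2 * h).
  { replace dp with (vadd q (vscale h v))
      by (unfold q, vsub, vadd, vscale; destruct dp; cbn [fst snd]; f_equal; ring).
    pose proof (vnorm_vadd_le q (vscale h v)) as Htri.
    assert (Hhv : vnorm (vscale h v) = h)
      by (unfold v; rewrite vnorm_vscale, vnorm_normalized, Rabs_right by lra; ring).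
    pose proof (Rmult_le_compat_r h th 1 ltac:(lra) ltac:(lra)); lra. }
  assert (Hdr : vdot dr dr <= (3 * h) ^ 2).
  { apply vdot_self_le; pose proof (vnorm_vsub_le de dp) as Htri; fold dr in Htri.
    pose proof (Rmult_le_compat_r h nu 1 ltac:(lra) ltac:(lra)); lra. }
  assert (Hdy : vdot dy dy <= ((alpha nu + 2 * beta nu) * h) ^ 2).
  { apply vdot_self_le.
    pose proof (vnorm_vsub_le (vscale (alpha nu) de) (vscale (beta nu) dp)) as Htri.
    fold dy in Htri; rewrite !vnorm_vscale, !Rabs_right in Htri by lra.
    pose proof (Rmult_le_compat_l (alpha nu) _ _ ltac:(lra) Hde).
    pose proof (Rmult_le_compat_l (beta nu) _ _ ltac:(lra) Hdp2).
    assert (Hnuh : nu * h <= h)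
      by (pose proof (Rmult_le_compat_r h nu 1 ltac:(lra) ltac:(lra)); lra).
    pose proof (Rmult_le_compat_l (alpha nu) _ _ ltac:(lra) Hnuh); lra. }
  assert (Hquad : a * gamma nu / vnorm r * vdot dr dr <= a * gamma nu / vnorm r * (3 * h) ^ 2)
    by (apply Rmult_le_compat_l; [left; apply Rdiv_lt_0_compat; nra | exact Hdr]).
  pose proof (lyap_expansion nu c r y de dp ltac:(lra) Hr (Rlt_le _ _ Ha)) as Hexp.
  pose proof (lyap_drift_ge nu c h th r y de dp Hnu Hr Ha HV ltac:(lra) ltac:(lra) Hde Hdp)
    as Hdrift.
  fold a z dr dy in Hexp, Hdrift; lra.
Qed.

(** * Real induction and continuity *)

Lemma real_induction (a b : R) (P : R -> Prop) :
  (forall t, a <= t < b -> (forall s, a <= s <= t -> P s) ->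
     exists eta, 0 < eta /\ forall s, t < s < t + eta -> s <= b -> P s) ->
  (forall t, a <= t <= b -> (forall s, a <= s < t -> P s) -> P t) ->
  forall t, a <= t <= b -> P t.
Proof.
  intros Hstep Hclose t Ht.
  set (E := fun x => a <= x <= b /\ forall s, a <= s <= x -> P s).
  assert (Pa : P a) by (apply Hclose; intros; lra).
  assert (Ea : E a) by (split; [lra | intros s Hs; replace s with a by lra; exact Pa]).
  assert (HEb : bound E) by (exists b; intros x [Hx _]; lra).
  destruct (completeness E HEb (ex_intro _ a Ea)) as [m [Hub Hlub]].
  assert (Ham : a <= m) by (apply Hub, Ea).
  assert (Hmb : m <= b) by (apply Hlub; intros x [Hx _]; lra).
  assert (Hbelow : forall s, a <= s < m -> P s).
  { intros s Hs; apply NNPP; intros HnP.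
    enough (m <= s) by lra.
    apply Hlub; intros x [Hx HPx]; destruct (Rle_lt_dec x s); auto.
    exfalso; apply HnP, HPx; lra. }
  assert (Em : forall s, a <= s <= m -> P s).
  { intros s Hs; destruct (Req_dec s m) as [->|]; [apply Hclose; auto; lra | apply Hbelow; lra]. }
  destruct (Req_dec m b) as [<-|Hmb'].
  - apply Em; lra.
  - destruct (Hstep m ltac:(lra) Em) as [eta [Heta Hnext]].
    set (m' := Rmin (m + eta / 2) b).
    assert (Hm' : m < m' <= b) by (unfold m'; split; [apply Rmin_glb_lt | apply Rmin_r]; lra).
    enough (m' <= m) by lra.
    apply Hub; split; [lra|].
    intros s Hs; destruct (Rle_lt_dec s m); [apply Em; lra|].
    apply Hnext; [| lra]; split; [lra|].
    pose proof (Rmin_l (m + eta / 2) b) as Hm'l; fold m' in Hm'l; lra.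
Qed.

Lemma continuity_pt_eps (f : R -> R) (t : R) :
  (forall eps, 0 < eps -> exists d, 0 < d /\
     forall s, Rabs (s - t) < d -> Rabs (f s - f t) < eps) ->
  continuity_pt f t.
Proof.
  intros Heps_delta eps Heps; destruct (Heps_delta eps Heps) as [d [Hd Hnear]].
  exists d; split; [lra|]; intros s [_ Hs]; exact (Hnear s Hs).
Qed.

Lemma continuity_pt_near (f : R -> R) (t eps : R) : continuity_pt f t -> 0 < eps ->
  exists d, 0 < d /\ forall s, Rabs (s - t) < d -> Rabs (f s - f t) < eps.
Proof.
  intros Hf Heps; destruct (Hf eps Heps) as [d [Hd Hnear]]; exists d; split; [lra|].
  intros s Hs; destruct (Req_dec s t) as [->|Hst].
  - rewrite Rminus_diag, Rabs_R0; exact Heps.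
  - exact (Hnear s (conj (conj I (not_eq_sym Hst)) Hs)).
Qed.

Lemma continuity_pt_pos_near (f : R -> R) (t : R) : continuity_pt f t -> 0 < f t ->
  exists d, 0 < d /\ forall s, Rabs (s - t) < d -> 0 < f s.
Proof.
  intros Hf Hpos; destruct (continuity_pt_near f t (f t / 2) Hf ltac:(lra)) as [d [Hd Hnear]].
  exists d; split; [exact Hd|]; intros s Hs; specialize (Hnear s Hs).
  apply Rabs_def2 in Hnear; lra.
Qed.

Lemma continuity_pt_ge_left (f : R -> R) (a t c : R) : a < t -> continuity_pt f t ->
  (forall s, a <= s < t -> c <= f s) -> c <= f t.
Proof.
  intros Hat Hf Hbelow; apply Rnot_lt_le; intros Hlt.
  destruct (continuity_pt_near f t (c - f t) Hf ltac:(lra)) as [d [Hd Hnear]].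
  set (s := Rmax a (t - d / 2)).
  assert (Hs : a <= s < t) by (unfold s; split; [apply Rmax_l | apply Rmax_lub_lt; lra]).
  assert (Hst : Rabs (s - t) < d)
    by (pose proof (Rmax_r a (t - d / 2)) as Hsr; fold s in Hsr; rewrite Rabs_left; lra).
  specialize (Hnear s Hst); specialize (Hbelow s Hs); apply Rabs_def2 in Hnear; lra.
Qed.

(* Continuity is only required up to the first zero: beyond it [g] may be arbitrary. *)
Lemma first_zero (g : R -> R) (a b : R) :
  (forall t, a <= t <= b -> (forall s, a <= s <= t -> g s <> 0) -> continuity_pt g t) ->
  (exists s, a <= s <= b /\ g s = 0) ->
  exists c, a <= c <= b /\ g c = 0 /\ forall s, a <= s < c -> g s <> 0.
Proof.
  intros Hcont [s [Hs Hgs]]; apply NNPP; intros Hnone.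
  enough (Hall : forall t, a <= t <= b -> g t <> 0) by exact (Hall s Hs Hgs).
  apply real_induction.
  - intros t Ht Hbefore.
    assert (Hgt : 0 < Rabs (g t)) by (apply Rabs_pos_lt, Hbefore; lra).
    destruct (continuity_pt_pos_near (fun u => Rabs (g u)) t
                (continuity_pt_comp g Rabs t (Hcont t ltac:(lra) Hbefore) (Rcontinuity_abs _)) Hgt)
      as [d [Hd Hnear]].
    exists d; split; [exact Hd|]; intros u Hu _ Hgu.
    specialize (Hnear u ltac:(rewrite Rabs_right; lra)); cbv beta in Hnear.
    rewrite Hgu, Rabs_R0 in Hnear; lra.
  - intros t Ht Hbefore Hgt; apply Hnone; exists t; auto.
Qed.

Lemma small_mul_le (c x eps : R) : 0 <= c -> 0 <= x -> 0 < eps -> x <= eps / (2 * (c + 1)) ->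
  c * x <= eps / 2.
Proof.
  intros Hc Hx Heps Hle.
  apply Rle_trans with ((c + 1) * (eps / (2 * (c + 1)))).
  - apply Rle_trans with ((c + 1) * x); [nra | apply Rmult_le_compat_l; lra].
  - right; field; lra.
Qed.

Lemma exp_weight_step (V V' k h e : R) : 0 <= V -> 0 <= k -> 0 <= h -> 0 <= e ->
  V * (1 + k * h) - e * h <= V' -> V - h * (k ^ 2 * h * V + e) <= V' * exp (- (k * h)).
Proof.
  intros HV Hk Hh He HV'.
  pose proof (exp_ineq1_le (- (k * h))) as Hlow.
  assert (Hup : exp (- (k * h)) <= 1).
  { rewrite <- exp_0; destruct (Req_dec (k * h) 0) as [->|];
      [rewrite Ropp_0; lra | left; apply exp_increasing; nra]. }
  pose proof (exp_pos (- (k * h))) as Hpos.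
  set (E := exp (- (k * h))) in *.
  assert (0 <= V * (1 + k * h)) by nra.
  assert (V * (1 + k * h) * (1 + - (k * h)) <= V * (1 + k * h) * E)
    by (apply Rmult_le_compat_l; lra).
  assert (e * h * E <= e * h) by (pose proof (Rmult_le_compat_l (e * h) E 1 ltac:(nra) Hup); lra).
  assert ((V * (1 + k * h) - e * h) * E <= V' * E) by (apply Rmult_le_compat_r; lra).
  nra.
Qed.

Lemma Rmax_lipschitz (c s t : R) : Rabs (Rmax c s - Rmax c t) <= Rabs (s - t).
Proof.
  unfold Rmax; destruct (Rle_dec c s), (Rle_dec c t); apply Rabs_le;
    pose proof (Rle_abs (s - t)); pose proof (Rle_abs (- (s - t))); rewrite Rabs_Ropp in *; lra.
Qed.

Lemma continuity_pt_Rmax (c t : R) : continuity_pt (fun s => Rmax c s) t.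
Proof.
  apply continuity_pt_eps; intros eps Heps; exists eps; split; auto; intros s Hs.
  pose proof (Rmax_lipschitz c s t); lra.
Qed.

Definition vcont (x : R -> vec) (t : R) : Prop :=
  continuity_pt (fun s => fst (x s)) t /\ continuity_pt (fun s => snd (x s)) t.

Lemma vcont_of_vnorm (x : R -> vec) (t : R) :
  (forall eps, 0 < eps -> exists d, 0 < d /\
     forall s, Rabs (s - t) < d -> vnorm (vsub (x s) (x t)) < eps) ->
  vcont x t.
Proof.
  intros Hnorm; split; apply continuity_pt_eps; intros eps Heps;
    destruct (Hnorm eps Heps) as [d [Hd Hnear]]; exists d; split; auto; intros s Hs;
    specialize (Hnear s Hs).
  - pose proof (Rabs_fst_le_vnorm (vsub (x s) (x t))); cbn [fst vsub] in *; lra.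
  - pose proof (Rabs_snd_le_vnorm (vsub (x s) (x t))); cbn [snd vsub] in *; lra.
Qed.

Lemma vcont_lipschitz (x : R -> vec) (L t : R) : 0 <= L ->
  (forall s, vnorm (vsub (x s) (x t)) <= L * Rabs (s - t)) -> vcont x t.
Proof.
  intros HL Hlip; apply vcont_of_vnorm; intros eps Heps.
  exists (eps / (L + 1)); split; [apply Rdiv_lt_0_compat; lra|]; intros s Hs.
  apply (Rmult_lt_compat_l (L + 1)) in Hs; [|lra].
  replace ((L + 1) * (eps / (L + 1))) with eps in Hs by (field; lra).
  pose proof (Hlip s); pose proof (Rabs_pos (s - t)); nra.
Qed.

Lemma vcont_vsub (x y : R -> vec) (t : R) :
  vcont x t -> vcont y t -> vcont (fun s => vsub (x s) (y s)) t.
Proof. intros [Hx1 Hx2] [Hy1 Hy2]; split; now apply continuity_pt_minus. Qed.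

Lemma vcont_vscale (c : R) (x : R -> vec) (t : R) :
  vcont x t -> vcont (fun s => vscale c (x s)) t.
Proof. intros [Hx1 Hx2]; split; now apply continuity_pt_scal. Qed.

Lemma vcont_const (u : vec) (t : R) : vcont (fun _ => u) t.
Proof. split; apply continuity_pt_const; intros ? ?; reflexivity. Qed.

Lemma vcont_of_has_vderiv (x : R -> vec) (t : R) (v : vec) : has_vderiv x t v -> vcont x t.
Proof.
  intros [H1 H2]; split; [exact (derivable_continuous_pt _ _ (exist _ _ H1))
                        | exact (derivable_continuous_pt _ _ (exist _ _ H2))].
Qed.

Lemma continuity_pt_vnorm (x : R -> vec) (t : R) :
  vcont x t -> continuity_pt (fun s => vnorm (x s)) t.
Proof.
  intros [H1 H2]; unfold vnorm.
  apply (continuity_pt_comp (fun s => fst (x s) ^ 2 + snd (x s) ^ 2) sqrt).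
  - apply continuity_pt_plus; apply continuity_pt_mult; auto;
      apply continuity_pt_mult; auto; apply continuity_pt_const; intros ? ?; reflexivity.
  - apply continuity_pt_sqrt; nra.
Qed.

Lemma continuity_pt_lyap (nu c : R) (r y : R -> vec) (t : R) : vcont r t -> vcont y t ->
  continuity_pt (fun s => lyap nu c (r s) (y s)) t.
Proof.
  intros Hr [Hy1 Hy2]; unfold lyap, vdot.
  assert (Hconst : forall k, continuity_pt (fun _ => k) t)
    by (intros k; apply continuity_pt_const; intros ? ?; reflexivity).
  pose proof (continuity_pt_vnorm r t Hr) as Hn.
  repeat first [ apply continuity_pt_minus | apply continuity_pt_plus | apply continuity_pt_mult
               | apply Hconst | assumption ].
Qed.

Lemma has_vderiv_increment (x : R -> vec) (t : R) (v : vec) (th : R) :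
  has_vderiv x t v -> 0 < th ->
  exists eta, 0 < eta /\ forall h, 0 < h < eta ->
    vnorm (vsub (vsub (x (t + h)) (x t)) (vscale h v)) <= th * h.
Proof.
  intros [H1 H2] Hth.
  destruct (H1 (th / 2) ltac:(lra)) as [d1 Hd1]; destruct (H2 (th / 2) ltac:(lra)) as [d2 Hd2].
  exists (Rmin d1 d2); split; [apply Rmin_glb_lt; apply cond_pos|]; intros h [Hh Hhd].
  assert (Hcomp : forall (f : R -> R) l (d : posreal),
     (forall k, k <> 0 -> Rabs k < d -> Rabs ((f (t + k) - f t) / k - l) < th / 2) -> h < d ->
     Rabs (f (t + h) - f t - h * l) <= th / 2 * h).
  { intros f l d Hf Hd.
    specialize (Hf h ltac:(lra) ltac:(rewrite Rabs_right; lra)).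
    replace (f (t + h) - f t - h * l) with (h * ((f (t + h) - f t) / h - l)) by (field; lra).
    rewrite Rabs_mult, Rabs_right by lra; nra. }
  pose proof (Hcomp (fun s => fst (x s)) _ d1 Hd1 ltac:(pose proof (Rmin_l d1 d2); lra)).
  pose proof (Hcomp (fun s => snd (x s)) _ d2 Hd2 ltac:(pose proof (Rmin_r d1 d2); lra)).
  pose proof (vnorm_le_abs (vsub (vsub (x (t + h)) (x t)) (vscale h v))).
  cbn [fst snd vsub vscale] in *; lra.
Qed.

(** * The closed loop *)

Section ClosedLoop.

Variables (nu delta t0 : R) (xE xP : R -> vec).
Hypothesis Hnu : 0 < nu < 1.
Hypothesis Hdelta : 0 < delta.
Hypothesis Hstart : xE t0 <> xP t0.
Hypothesis Hevader : evader_admissible nu t0 xE.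
Hypothesis Hright : right_cont_at xP t0.
Hypothesis Hlaw : forall t, t0 < t -> (forall s, t0 <= s <= t -> xP s <> xE s) ->
  has_vderiv xP t (vP nu delta t0 xE xP t).

Local Notation RCv := (RC nu delta t0 xE xP).
Local Notation uncaught T := (forall s, t0 <= s <= T -> xP s <> xE s).

Definition margin (t : R) : R := RCv - RA nu xE xP t.
Definition lyapunov (t : R) : R := lyap nu RCv (rvec xE xP t) (yvec nu t0 xE xP t).
Definition rate : R := nu / ((1 + nu) * RCv).
Definition weighted (t : R) : R := lyapunov t * exp (- (rate * (t - t0))).

Lemma delta_lt_RC : delta < RCv.
Proof.
  unfold RC, RA; pose proof (gamma_pos nu Hnu); pose proof (vnorm_vsub_gt0 _ _ Hstart).
  unfold rvec; nra.
Qed.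

Lemma margin_t0 : margin t0 = delta.
Proof. unfold margin, RC; ring. Qed.

Lemma weighted_t0 : weighted t0 = delta ^ 2.
Proof.
  unfold weighted; replace (rate * (t0 - t0)) with 0 by ring; rewrite Ropp_0, exp_0.
  unfold lyapunov, lyap, yvec, xC, vdot, vsub, RC, RA; cbn [fst snd]; ring.
Qed.

Lemma lyapunov_pos_of_weighted t : 0 < weighted t -> 0 < lyapunov t.
Proof.
  unfold weighted; intros HW; pose proof (exp_pos (- (rate * (t - t0)))).
  destruct (Rlt_le_dec 0 (lyapunov t)) as [|Hle]; auto; nra.
Qed.

Lemma rvec_pos t : xP t <> xE t -> 0 < vnorm (rvec xE xP t).
Proof. intros Hfree; apply vnorm_vsub_gt0; auto. Qed.

Lemma rvec_shift t h : rvec xE xP (t + h)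
  = vadd (rvec xE xP t) (vsub (vsub (xE (t + h)) (xE t)) (vsub (xP (t + h)) (xP t))).
Proof. unfold rvec, vadd, vsub; cbn [fst snd]; f_equal; ring. Qed.

Lemma yvec_shift t h : yvec nu t0 xE xP (t + h)
  = vadd (yvec nu t0 xE xP t)
      (vsub (vscale (alpha nu) (vsub (xE (t + h)) (xE t)))
            (vscale (beta nu) (vsub (xP (t + h)) (xP t)))).
Proof. unfold yvec, xA, vadd, vsub, vscale; cbn [fst snd]; f_equal; ring. Qed.

(* Curves are frozen at their value at [t0] on the left, so that continuity of the
   extended curve at [t0] means right continuity of the original one. *)
Lemma vcont_evader t : vcont (fun s => xE (Rmax t0 s)) t.
Proof.
  apply (vcont_lipschitz _ nu); [lra|]; intros s.
  pose proof (Hevader (Rmax t0 t) (Rmax t0 s) (Rmax_l _ _) (Rmax_l _ _)).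
  pose proof (Rmax_lipschitz t0 s t); nra.
Qed.

Lemma vcont_pursuer t : t0 <= t -> uncaught t -> vcont (fun s => xP (Rmax t0 s)) t.
Proof.
  intros Ht Hfree; destruct (Req_dec t t0) as [->|Hne].
  - apply vcont_of_vnorm; intros eps Heps; destruct (Hright eps Heps) as [d [Hd Hnear]].
    exists d; split; [exact Hd|]; intros s Hs; rewrite (Rmax_left t0 t0) by lra.
    destruct (Rle_lt_dec s t0).
    + rewrite Rmax_left, vnorm_vsub_diag by lra; exact Heps.
    + rewrite Rmax_right by lra; apply Hnear; apply Rabs_def2 in Hs; lra.
  - destruct (vcont_of_has_vderiv _ _ _ (Hlaw t ltac:(lra) Hfree)) as [H1 H2].
    assert (Hloc : forall s, R_dist s t < t - t0 -> Rmax t0 s = s)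
      by (intros s Hs; unfold R_dist in Hs; apply Rabs_def2 in Hs; apply Rmax_right; lra).
    split; [ apply (continuity_pt_locally_ext (fun s => fst (xP s))) with (t - t0)
           | apply (continuity_pt_locally_ext (fun s => snd (xP s))) with (t - t0) ];
      auto; try lra; intros s Hs; now rewrite Hloc.
Qed.

Lemma vcont_rvec t : t0 <= t -> uncaught t -> vcont (fun s => rvec xE xP (Rmax t0 s)) t.
Proof.
  intros Ht Hfree; exact (vcont_vsub _ _ t (vcont_evader t) (vcont_pursuer t Ht Hfree)).
Qed.

Lemma vcont_yvec t : t0 <= t -> uncaught t -> vcont (fun s => yvec nu t0 xE xP (Rmax t0 s)) t.
Proof.
  intros Ht Hfree; apply (vcont_vsub (fun s => xA nu xE xP (Rmax t0 s))); [|apply vcont_const].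
  apply (vcont_vsub (fun s => vscale (alpha nu) (xE (Rmax t0 s))));
    apply vcont_vscale; [apply vcont_evader | apply vcont_pursuer; auto].
Qed.

Lemma continuity_margin t : t0 <= t -> uncaught t ->
  continuity_pt (fun s => margin (Rmax t0 s)) t.
Proof.
  intros Ht Hfree; unfold margin, RA.
  apply continuity_pt_minus; [apply continuity_pt_const; intros ? ?; reflexivity|].
  apply continuity_pt_scal, continuity_pt_vnorm, vcont_rvec; auto.
Qed.

Lemma continuity_weighted t : t0 <= t -> uncaught t ->
  continuity_pt (fun s => weighted (Rmax t0 s)) t.
Proof.
  intros Ht Hfree; unfold weighted.
  apply continuity_pt_mult.
  - apply continuity_pt_lyap; [apply vcont_rvec | apply vcont_yvec]; auto.
  - apply (continuity_pt_comp (fun s => - (rate * (Rmax t0 s - t0))) exp);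
      [| apply derivable_continuous_pt, derivable_pt_exp].
    apply continuity_pt_opp, continuity_pt_scal, continuity_pt_minus;
      [apply continuity_pt_Rmax | apply continuity_pt_const; intros ? ?; reflexivity].
Qed.

Lemma lyapunov_growth t : t0 < t -> uncaught t -> 0 < margin t -> 0 < lyapunov t ->
  forall eps, 0 < eps -> exists eta, 0 < eta /\ forall h, 0 < h < eta ->
    lyapunov t * (1 + rate * h) - eps * h <= lyapunov (t + h).
Proof.
  intros Ht Hfree Ha HV eps Heps.
  pose proof (rvec_pos t (Hfree t ltac:(lra))) as Hr.
  pose proof (gamma_pos nu Hnu) as Hga; pose proof (alpha_pos nu ltac:(lra)) as Hal.
  assert (Hbe : 0 < beta nu) by (apply Rmult_lt_0_compat; [nra | exact Hal]).
  assert (HRC : 0 < RCv) by (pose proof delta_lt_RC; lra).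
  set (C := 4 * gamma nu * RCv).
  set (M := 9 * margin t * gamma nu / vnorm (rvec xE xP t) + (alpha nu + 2 * beta nu) ^ 2).
  assert (HC : 0 <= C) by (unfold C; nra).
  assert (HM : 0 <= M).
  { assert (0 <= 9 * margin t * gamma nu / vnorm (rvec xE xP t))
      by (left; apply Rdiv_lt_0_compat; nra).
    pose proof (pow2_ge_0 (alpha nu + 2 * beta nu)); unfold M; lra. }
  set (th := Rmin 1 (eps / (2 * (C + 1)))).
  assert (Hth : 0 < th <= 1)
    by (unfold th; split; [apply Rmin_glb_lt; [lra | apply Rdiv_lt_0_compat; lra] | apply Rmin_l]).
  destruct (has_vderiv_increment xP t _ th (Hlaw t Ht Hfree) (proj1 Hth)) as [eta1 [Heta1 Hinc]].
  exists (Rmin eta1 (eps / (2 * (M + 1)))); split.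
  { apply Rmin_glb_lt; [lra | apply Rdiv_lt_0_compat; lra]. }
  intros h [Hh Hheta]; pose proof (Rmin_l eta1 (eps / (2 * (M + 1)))).
  pose proof (Rmin_r eta1 (eps / (2 * (M + 1)))).
  assert (Hde : vnorm (vsub (xE (t + h)) (xE t)) <= nu * h).
  { pose proof (Hevader t (t + h) ltac:(lra) ltac:(lra)) as Hlip.
    replace (t + h - t) with h in Hlip by ring; rewrite Rabs_right in Hlip; lra. }
  pose proof (lyap_step nu RCv h th (rvec xE xP t) (yvec nu t0 xE xP t) _ _ Hnu Hr Ha HV Hh
                ltac:(lra) Hde (Hinc h ltac:(lra))) as Hstep.
  unfold lyapunov; rewrite rvec_shift, yvec_shift; fold (lyapunov t) rate C in Hstep |- *.
  change (RCv - gamma nu * vnorm (rvec xE xP t)) with (margin t) in Hstep; fold M in Hstep.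
  assert (Hth_small : C * th <= eps / 2)
    by (apply small_mul_le; auto; [lra | apply Rmin_r]).
  assert (Hh_small : M * h <= eps / 2) by (apply small_mul_le; auto; lra).
  assert (h * (C * th + h * M) <= eps * h) by nra.
  lra.
Qed.

Lemma rate_pos : 0 < rate.
Proof. unfold rate; pose proof delta_lt_RC; apply Rdiv_lt_0_compat; nra. Qed.

Lemma weighted_right_step t : t0 < t -> uncaught t -> 0 < margin t -> 0 < lyapunov t ->
  forall eps, 0 < eps -> exists eta, 0 < eta /\ forall h, 0 < h < eta ->
    weighted t - eps * h <= weighted (t + h).
Proof.
  intros Ht Hfree Ha HV eps Heps; pose proof rate_pos as Hk.
  set (V := lyapunov t) in *.
  destruct (lyapunov_growth t Ht Hfree Ha HV (eps / 2) ltac:(lra)) as [eta1 [Heta1 Hgrow]].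
  exists (Rmin eta1 (eps / (2 * (rate ^ 2 * V + 1)))); split.
  { apply Rmin_glb_lt; [lra | apply Rdiv_lt_0_compat; nra]. }
  intros h [Hh Hheta]; pose proof (Rmin_l eta1 (eps / (2 * (rate ^ 2 * V + 1)))).
  pose proof (Rmin_r eta1 (eps / (2 * (rate ^ 2 * V + 1)))).
  pose proof (exp_weight_step V (lyapunov (t + h)) rate h (eps / 2) ltac:(lra) ltac:(lra)
                ltac:(lra) ltac:(lra) (Hgrow h ltac:(lra))) as Hw.
  assert (Hsmall : rate ^ 2 * V * h <= eps / 2)
    by (apply small_mul_le; [nra | lra | lra | lra]).
  set (E0 := exp (- (rate * (t - t0)))).
  assert (HE0 : 0 < E0 <= 1).
  { split; [apply exp_pos|]; unfold E0; rewrite <- exp_0; left; apply exp_increasing; nra. }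
  unfold weighted; fold V E0.
  replace (exp (- (rate * (t + h - t0)))) with (exp (- (rate * h)) * E0)
    by (unfold E0; rewrite <- exp_plus; f_equal; ring).
  pose proof (Rmult_le_pos _ _ (Rmult_le_pos _ _ (pow2_ge_0 rate) (Rlt_le _ _ Hh)) (Rlt_le _ _ HV)).
  assert (Hloss : 0 <= h * (rate ^ 2 * h * V + eps / 2)) by (apply Rmult_le_pos; lra).
  assert (E0 * (h * (rate ^ 2 * h * V + eps / 2)) <= h * (rate ^ 2 * h * V + eps / 2))
    by (pose proof (Rmult_le_compat_r _ _ _ Hloss (proj2 HE0)); lra).
  pose proof (Rmult_le_compat_r E0 _ _ (Rlt_le _ _ (proj1 HE0)) Hw); nra.
Qed.

Lemma margin_pos_of_lyapunov_pos t : 0 <= margin t -> 0 < lyapunov t -> 0 < margin t.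
Proof.
  intros [Ha|Ha] HV; auto.
  unfold lyapunov, lyap in HV; change (RCv - gamma nu * vnorm (rvec xE xP t)) with (margin t) in HV.
  rewrite <- Ha, <- vnorm_sqr in HV; pose proof (pow2_ge_0 (vnorm (yvec nu t0 xE xP t))); nra.
Qed.

(* At [t0] the pursuer need not be differentiable, only right continuous, so the first
   step of the induction loses [eps] outright; hence the [1 +]. *)
Local Notation invariant_eps eps t :=
  (0 < margin t /\ delta ^ 2 - eps * (1 + (t - t0)) <= weighted t).

Lemma invariant_eps_step eps t : t0 <= t -> uncaught t -> 0 < eps ->
  eps * (1 + (t - t0)) < delta ^ 2 -> invariant_eps eps t ->
  exists eta, 0 < eta /\ forall s, t < s < t + eta -> invariant_eps eps s.
Proof.
  intros Ht Hfree Heps Hsmall [Ha HW].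
  assert (HRmax : forall s, t0 <= s -> Rmax t0 s = s) by (intros; apply Rmax_right; lra).
  destruct (continuity_pt_pos_near _ t (continuity_margin t Ht Hfree)) as [da [Hda Hnear_a]];
    [rewrite HRmax by lra; exact Ha|].
  assert (Hmargin : forall s, t < s < t + da -> 0 < margin s).
  { intros s Hs; rewrite <- (HRmax s) by lra; apply Hnear_a; rewrite Rabs_right; lra. }
  destruct (Req_dec t t0) as [->|Hne].
  - destruct (continuity_pt_near _ t0 eps (continuity_weighted t0 Ht Hfree) Heps)
      as [dw [Hdw Hnear_w]].
    exists (Rmin da dw); split; [apply Rmin_glb_lt; lra|]; intros s Hs.
    pose proof (Rmin_l da dw); pose proof (Rmin_r da dw).
    specialize (Hnear_w s ltac:(rewrite Rabs_right; lra)); cbv beta in Hnear_w.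
    rewrite !HRmax, weighted_t0 in Hnear_w by lra; apply Rabs_def2 in Hnear_w.
    split; [apply Hmargin; lra | nra].
  - assert (HV : 0 < lyapunov t) by (apply lyapunov_pos_of_weighted; nra).
    destruct (weighted_right_step t ltac:(lra) Hfree Ha HV eps Heps) as [dw [Hdw Hstep]].
    exists (Rmin da dw); split; [apply Rmin_glb_lt; lra|]; intros s Hs.
    pose proof (Rmin_l da dw); pose proof (Rmin_r da dw).
    specialize (Hstep (s - t) ltac:(lra)); replace (t + (s - t)) with s in Hstep by ring.
    split; [apply Hmargin; lra | nra].
Qed.

Lemma invariant_eps_closed eps t : t0 < t -> uncaught t -> 0 < eps ->
  eps * (1 + (t - t0)) < delta ^ 2 -> (forall s, t0 <= s < t -> invariant_eps eps s) ->
  invariant_eps eps t.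
Proof.
  intros Ht Hfree Heps Hsmall IH.
  assert (HRmax : forall s, t0 <= s -> Rmax t0 s = s) by (intros; apply Rmax_right; lra).
  assert (Ha : 0 <= margin t).
  { rewrite <- (HRmax t) by lra.
    apply (continuity_pt_ge_left (fun s => margin (Rmax t0 s)) t0);
      [lra | apply continuity_margin; [lra | exact Hfree] |].
    intros s Hs; rewrite HRmax by lra; left; apply IH, Hs. }
  assert (HW : delta ^ 2 - eps * (1 + (t - t0)) <= weighted t).
  { rewrite <- (HRmax t) at 2 by lra.
    apply (continuity_pt_ge_left (fun s => weighted (Rmax t0 s)) t0);
      [lra | apply continuity_weighted; [lra | exact Hfree] |].
    intros s Hs; rewrite HRmax by lra; destruct (IH s Hs) as [_ HWs]; nra. }
  assert (HV : 0 < lyapunov t) by (apply lyapunov_pos_of_weighted; nra).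
  split; [apply margin_pos_of_lyapunov_pos; auto | exact HW].
Qed.

Lemma invariant_eps_holds T eps : uncaught T -> 0 < eps -> eps * (1 + (T - t0)) < delta ^ 2 ->
  forall t, t0 <= t <= T -> invariant_eps eps t.
Proof.
  intros Hfree Heps Hsmall.
  assert (Hfree' : forall t, t <= T -> uncaught t) by (intros t Ht s Hs; apply Hfree; lra).
  assert (Hsmall' : forall t, t <= T -> eps * (1 + (t - t0)) < delta ^ 2)
    by (intros t Ht; pose proof (Rmult_le_compat_l eps (1 + (t - t0)) (1 + (T - t0))
                                  ltac:(lra) ltac:(lra)); lra).
  apply real_induction.
  - intros t Ht IH; destruct (invariant_eps_step eps t ltac:(lra) (Hfree' t ltac:(lra)) Heps
                               (Hsmall' t ltac:(lra)) (IH t ltac:(lra))) as [eta [Heta Hnext]].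
    exists eta; split; [exact Heta|]; intros s Hs _; apply Hnext, Hs.
  - intros t Ht IH; destruct (Req_dec t t0) as [->|Hne].
    + rewrite margin_t0, weighted_t0; split; nra.
    + apply invariant_eps_closed; auto; [lra | apply Hfree' | apply Hsmall']; lra.
Qed.

Lemma closed_loop_invariant T : uncaught T ->
  forall t, t0 <= t <= T -> 0 < margin t /\ delta ^ 2 <= weighted t.
Proof.
  intros Hfree t Ht; set (L := 1 + (T - t0)).
  assert (HL : 1 <= L) by (unfold L; lra).
  assert (Hinv : forall e, 0 < e ->
            0 < margin t /\ delta ^ 2 - Rmin e (delta ^ 2 / 2) / L * (1 + (t - t0)) <= weighted t).
  { intros e He; set (m := Rmin e (delta ^ 2 / 2)).
    assert (Hm : 0 < m) by (apply Rmin_glb_lt; nra).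
    apply (invariant_eps_holds T); auto; [apply Rdiv_lt_0_compat; lra|].
    replace (m / L * (1 + (T - t0))) with m by (unfold L; field; lra).
    pose proof (Rmin_r e (delta ^ 2 / 2)) as Hmr; fold m in Hmr; nra. }
  split; [apply (Hinv 1); lra|].
  apply Rle_plus_epsilon; intros e He; destruct (Hinv e He) as [_ HW].
  assert (Hle : Rmin e (delta ^ 2 / 2) / L * (1 + (t - t0)) <= Rmin e (delta ^ 2 / 2)).
  { replace (Rmin e (delta ^ 2 / 2)) with (Rmin e (delta ^ 2 / 2) / L * L) at 2 by (field; lra).
    apply Rmult_le_compat_l; [|unfold L; lra].
    left; apply Rdiv_lt_0_compat; [apply Rmin_glb_lt; nra | lra]. }
  pose proof (Rmin_l e (delta ^ 2 / 2)); lra.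
Qed.

Lemma lyapunov_lt_RC_sqr t : xP t <> xE t -> 0 < margin t -> lyapunov t < RCv ^ 2.
Proof.
  intros Hfree Ha; pose proof (rvec_pos t Hfree); pose proof (gamma_pos nu Hnu).
  unfold lyapunov, lyap; rewrite <- vnorm_sqr.
  change (RCv - gamma nu * vnorm (rvec xE xP t)) with (margin t).
  assert (margin t < RCv) by (unfold margin, RA; nra).
  pose proof (pow2_ge_0 (vnorm (yvec nu t0 xE xP t))); nra.
Qed.

Lemma capture_time_bound T : t0 <= T -> uncaught T ->
  T < t0 + 2 * (1 + / nu) * RCv * ln (RCv / delta).
Proof.
  intros HT Hfree; destruct (closed_loop_invariant T Hfree T ltac:(lra)) as [Ha HW].
  pose proof (lyapunov_lt_RC_sqr T (Hfree T ltac:(lra)) Ha) as HV.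
  pose proof delta_lt_RC as HRC; pose proof rate_pos as Hk.
  assert (Hgrow : delta ^ 2 * exp (rate * (T - t0)) < RCv ^ 2).
  { unfold weighted in HW.
    pose proof (Rmult_le_compat_r (exp (rate * (T - t0))) _ _ (Rlt_le _ _ (exp_pos _)) HW) as HWe.
    rewrite Rmult_assoc, <- exp_plus, Rplus_opp_l, exp_0, Rmult_1_r in HWe; lra. }
  assert (Hln : rate * (T - t0) < 2 * ln (RCv / delta)).
  { replace (2 * ln (RCv / delta)) with (ln ((RCv / delta) ^ 2))
      by (rewrite ln_pow by (apply Rdiv_lt_0_compat; lra); simpl; ring).
    rewrite <- (ln_exp (rate * (T - t0))); apply ln_increasing; [apply exp_pos|].
    replace ((RCv / delta) ^ 2) with (RCv ^ 2 / delta ^ 2) by (field; lra).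
    apply (Rmult_lt_reg_l (delta ^ 2)); [nra|].
    replace (delta ^ 2 * (RCv ^ 2 / delta ^ 2)) with (RCv ^ 2) by (field; lra); lra. }
  unfold rate in Hln.
  replace (2 * (1 + / nu) * RCv * ln (RCv / delta))
    with (2 * ln (RCv / delta) / (nu / ((1 + nu) * RCv))) by (field; lra).
  apply (Rmult_lt_reg_l (nu / ((1 + nu) * RCv))); [apply Rdiv_lt_0_compat; nra|].
  replace (nu / ((1 + nu) * RCv) * (t0 + 2 * ln (RCv / delta) / (nu / ((1 + nu) * RCv))))
    with (nu / ((1 + nu) * RCv) * t0 + 2 * ln (RCv / delta)) by (field; nra).
  lra.
Qed.

Lemma closed_loop_safe t : t0 <= t -> uncaught t ->
  zP nu delta t0 xE xP t <> vzero
  /\ subset2 (Adisc nu xE xP t) (interior2 (Cdisc nu delta t0 xE xP)).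
Proof.
  intros Ht Hfree; destruct (closed_loop_invariant t Hfree t ltac:(lra)) as [Ha HW].
  assert (HV : 0 < lyapunov t) by (apply lyapunov_pos_of_weighted; nra).
  assert (Hy : vnorm (yvec nu t0 xE xP t) < margin t) by (apply vnorm_lt_of_lyap_pos; auto).
  split.
  - intros Hz.
    assert (Hpos : 0 < vnorm (zP nu delta t0 xE xP t)).
    { apply vnorm_pursuer_dir_gt0; [lra | apply rvec_pos, Hfree; lra|].
      rewrite <- vnorm_sqr; pose proof (vnorm_ge0 (yvec nu t0 xE xP t)).
      change (RCv - RA nu xE xP t) with (margin t); nra. }
    rewrite Hz, vnorm_vzero in Hpos; lra.
  - apply cdisc_subset_interior; unfold margin in Hy; unfold yvec in Hy; lra.
Qed.

Lemma capture_bound_pos : 0 < 2 * (1 + / nu) * RCv * ln (RCv / delta).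
Proof.
  pose proof delta_lt_RC; pose proof (Rinv_0_lt_compat nu ltac:(lra)).
  assert (0 < ln (RCv / delta)).
  { rewrite <- ln_1; apply ln_increasing; [lra|].
    apply (Rmult_lt_reg_r delta); [lra|]; unfold Rdiv; rewrite Rmult_assoc, Rinv_l; lra. }
  repeat apply Rmult_lt_0_compat; lra.
Qed.

Definition separation (s : R) : R := vnorm (rvec xE xP (Rmax t0 s)).

Lemma separation_eq0 s : t0 <= s -> separation s = 0 <-> xP s = xE s.
Proof.
  intros Hs; unfold separation, rvec; rewrite Rmax_right by lra; split.
  - intros H0; symmetry; apply vnorm_vsub_eq0, H0.
  - intros ->; apply vnorm_vsub_diag.
Qed.

Lemma continuity_separation t : t0 <= t -> uncaught t -> continuity_pt separation t.
Proof. intros Ht Hfree; apply continuity_pt_vnorm, vcont_rvec; auto. Qed.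
End ClosedLoop.

Theorem theorem1 (nu delta t0 : R) (xE xP : R -> vec) :
  0 < nu < 1 ->
  0 < delta ->
  xE t0 <> xP t0 ->
  evader_admissible nu t0 xE ->
  right_cont_at xP t0 ->
  (forall t, t0 < t ->
     (forall s, t0 <= s <= t -> xP s <> xE s) ->
     has_vderiv xP t (vP nu delta t0 xE xP t)) ->
  exists tc,
    t0 < tc /\
    tc <= t0 + 2 * (1 + / nu) * RC nu delta t0 xE xP
                 * ln (RC nu delta t0 xE xP / delta) /\
    xP tc = xE tc /\
    (forall t, t0 <= t < tc -> xP t <> xE t) /\
    (forall t, t0 <= t < tc -> zP nu delta t0 xE xP t <> vzero) /\
    (forall t, t0 < t < tc ->
       subset2 (Adisc nu xE xP t) (interior2 (Cdisc nu delta t0 xE xP))).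
Proof.
  intros Hnu Hdelta Hstart Hevader Hright Hlaw.
  set (B := 2 * (1 + / nu) * RC nu delta t0 xE xP * ln (RC nu delta t0 xE xP / delta)).
  pose proof (capture_bound_pos nu delta t0 xE xP Hnu Hdelta Hstart) as HB; fold B in HB.
  set (sep := separation t0 xE xP).
  assert (Hcaught : exists s, t0 <= s <= t0 + B /\ sep s = 0).
  { apply NNPP; intros Hnone.
    assert (Hfree : forall s, t0 <= s <= t0 + B -> xP s <> xE s)
      by (intros s Hs Hcap; apply Hnone; exists s; split; [|apply separation_eq0]; tauto).
    pose proof (capture_time_bound nu delta t0 xE xP Hnu Hdelta Hstart Hevader Hright Hlaw
                  (t0 + B) ltac:(lra) Hfree) as Hbound; fold B in Hbound; lra. }
  destruct (first_zero sep t0 (t0 + B)) as [tc [Htc [Hcap Hbefore]]]; [|exact Hcaught|].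
  { intros t Ht Hsep; eapply continuity_separation; eauto; [lra|].
    intros s Hs Hcap; apply (Hsep s Hs), separation_eq0; tauto. }
  assert (Hfree : forall t, t0 <= t < tc -> xP t <> xE t)
    by (intros t Ht Hc; apply (Hbefore t Ht), separation_eq0; tauto).
  assert (Htc0 : t0 < tc).
  { destruct (proj1 Htc) as [|<-]; auto.
    exfalso; apply Hstart; symmetry; apply (separation_eq0 t0 xE xP t0); auto; lra. }
  assert (Hsafe : forall t, t0 <= t < tc -> zP nu delta t0 xE xP t <> vzero
                    /\ subset2 (Adisc nu xE xP t) (interior2 (Cdisc nu delta t0 xE xP)))
    by (intros t Ht; apply (closed_loop_safe nu delta t0 xE xP); auto; [lra|];
        intros s Hs; apply Hfree; lra).
  exists tc; repeat split; try lra.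
  - apply (separation_eq0 t0 xE xP tc); [lra | exact Hcap].
  - exact Hfree.
  - intros t Ht; apply Hsafe; exact Ht.
  - intros t Ht; apply Hsafe; lra.
Qed.
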